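(* Let $k\geq\ell\geq t+2$ and $n\geq2L(k,t)$. (i) If $\ell\geq2t+2$, then $r_1(n,k,\ell,t)>r_2(n,k,\ell,t)$. (ii) If $\ell\leq2t+1$ and $(k,\ell)\notin\{(2t+1,2t+1),(4,3)\}$, then $r_1(n,k,\ell,t)<r_2(n,k,\ell,t)$.
   Context: $S(n,k)$ is the Stirling number of the second kind (number of partitions of an $n$-set into $k$ nonempty blocks), with $S(n,a)=0$ for $a\leq0$. $L(k,t)=(t+1)+(k-t+1)\log_2((t+1)(k-t+1))$. $r_1(n,k,\ell,t)=\Big(\sum_{j=1}^{\ell-t}(-1)^{j-1}\binom{\ell-t}{j}S(n-t-j,k-t-j)\Big)\big(S(n-t,\ell-t)+t\big)$ and $r_2(n,k,\ell,t)=S(n-t-1,k-t-1)\big((t+1)S(n-t,\ell-t)-tS(n-t-1,\ell-t-1)\big)$. *)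

From Stdlib Require Import Reals ZArith List Lia Lra.
Open Scope Z_scope.

Fixpoint stirling2 (n k : nat) : nat :=
  match n, k with
  | O, O => 1%nat
  | O, S _ => 0%nat
  | S _, O => 0%nat
  | S n', S k' => (S k' * stirling2 n' (S k') + stirling2 n' k')%nat
  end.

(* S(n,a) with integer arguments, with the paper's convention S(n,a)=0 for a<=0
   (and 0 for negative n, which never occurs under the hypotheses). *)
Definition SZ (n a : Z) : Z :=
  if (a <=? 0) then 0
  else if (n <? 0) then 0
  else Z.of_nat (stirling2 (Z.to_nat n) (Z.to_nat a)).

Fixpoint binom (n k : nat) : nat :=
  match n, k with
  | _, O => 1%nat
  | O, S _ => 0%nat
  | S n', S k' => (binom n' k' + binom n' (S k'))%nat
  end.

Definition r1 (n k l t : nat) : Z :=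
  let N := Z.of_nat n in let K := Z.of_nat k in
  let Lz := Z.of_nat l in let T := Z.of_nat t in
  (fold_right Z.add 0
     (map (fun j : nat =>
             let J := Z.of_nat j in
             (-1) ^ (J - 1) * Z.of_nat (binom (l - t) j) * SZ (N - T - J) (K - T - J))
          (seq 1 (l - t))))
  * (SZ (N - T) (Lz - T) + T).

Definition r2 (n k l t : nat) : Z :=
  let N := Z.of_nat n in let K := Z.of_nat k in
  let Lz := Z.of_nat l in let T := Z.of_nat t in
  SZ (N - T - 1) (K - T - 1)
  * ((T + 1) * SZ (N - T) (Lz - T) - T * SZ (N - T - 1) (Lz - T - 1)).

Open Scope R_scope.
Definition log2 (x : R) : R := ln x / ln 2.

Definition Lkt (k t : nat) : R :=
  (INR t + 1) + (INR k - INR t + 1) * log2 ((INR t + 1) * (INR k - INR t + 1)).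
Close Scope R_scope.

From Stdlib Require Import Reals ZArith List Lia Lra Psatz.

(* Put K = k - t, L = l - t, m = n - t and a_j = S(m-j, K-j).  Then
   r_1 = (sum_j (-1)^(j-1) C(L,j) a_j) (S(m,L) + t) and
   r_2 = a_1 ((t+1) S(m,L) - t S(m-1,L-1)).
   Comparing the expansion x^M = sum_j x(x-1)...(x-j+1) S(M,j) at x = p and
   x = p - 1 gives p^M - p (p-1)^M <= p! S(M,p) <= p^M, hence
   S(M,q) (1 - K b) <= b S(M+1,q+1) with b = (1 - 1/K)^(m-K); the hypothesis
   n >= 2 L(k,t) is what makes b ((t+1)(K+1))^2 <= 2.  Therefore the terms
   C(L,j) a_j decrease from j = 2 on, C(L,2) a_2 < a_1, and the alternating sum
   equals L a_1 - C(L,2) a_2 + r with 0 <= r <= C(L,3) a_3.  If L >= t + 2 this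
   already gives r_1 > r_2.  If L <= t, the estimate t (S(m-1,L-1) + L) < S(m,L)
   gives r_1 < r_2.  In the critical case L = t + 1 one needs
   t a_1 (S(m-1,L-1) + L) < (C(L,2) a_2 - C(L,3) a_3) S(m,L), which follows from
   the power bounds when K >= L + 1 and K >= 4; these fail exactly for the two
   excluded pairs (k,l). *)

Open Scope nat_scope.

Fixpoint falling (x j : nat) : nat :=
  match j with O => 1 | S j' => falling x j' * (x - j') end.

Fixpoint sum_below (f : nat -> nat) (N : nat) : nat :=
  match N with O => 0 | S N' => sum_below f N' + f N' end.

Lemma falling_eq_0 x j : x < j -> falling x j = 0.
Proof.
  induction j as [|j IH]; intros Hj; [lia|]; simpl.
  destruct (Nat.eq_dec j x) as [->|Hne].
  - rewrite Nat.sub_diag; lia.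
  - rewrite IH by lia; lia.
Qed.

Lemma falling_succ x j : falling (S x) (S j) = S x * falling x j.
Proof.
  induction j as [|j IH]; [simpl; lia|].
  change (falling (S x) (S (S j))) with (falling (S x) (S j) * (S x - S j)).
  rewrite IH; simpl falling; lia.
Qed.

Lemma falling_diag p : falling p p = fact p.
Proof. induction p as [|p IH]; [reflexivity|]. rewrite falling_succ, IH; reflexivity. Qed.

Lemma mul_falling x j : x * falling x j = falling x (S j) + j * falling x j.
Proof.
  simpl; destruct (le_lt_dec j x).
  - replace x with ((x - j) + j) at 1 by lia; nia.
  - rewrite falling_eq_0 by lia; lia.
Qed.

Lemma falling_succ_le x j : j <> S x -> falling (S x) j <= S x * falling x j.
Proof.
  intros Hj; destruct j as [|j]; [simpl; lia|].
  rewrite falling_succ; apply Nat.mul_le_mono_l.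
  destruct (le_lt_dec x j).
  - rewrite (falling_eq_0 x j) by lia; lia.
  - simpl; replace (x - j) with (S (x - j - 1)) by lia; nia.
Qed.

Lemma fact_le_pow p : fact p <= p ^ p.
Proof.
  rewrite <- falling_diag.
  assert (forall j, falling p j <= p ^ j) as H.
  { induction j; simpl; [lia|]. rewrite Nat.mul_comm; apply Nat.mul_le_mono; lia. }
  apply H.
Qed.

Lemma sum_below_ext f g N :
  (forall j, j < N -> f j = g j) -> sum_below f N = sum_below g N.
Proof.
  induction N as [|N IH]; intros H; simpl; auto.
  rewrite IH by (intros; apply H; lia). rewrite H by lia. reflexivity.
Qed.

Lemma sum_below_add f g N :
  sum_below (fun j => f j + g j) N = sum_below f N + sum_below g N.
Proof. induction N; simpl; lia. Qed.

Lemma sum_below_mul_l c f N : sum_below (fun j => c * f j) N = c * sum_below f N.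
Proof. induction N; simpl; nia. Qed.

Lemma sum_below_succ_l f N : sum_below f (S N) = f 0 + sum_below (fun j => f (S j)) N.
Proof. induction N; simpl in *; lia. Qed.

Lemma le_sum_below f N i : i < N -> f i <= sum_below f N.
Proof.
  induction N as [|N IH]; intros Hi; [lia|]; simpl.
  destruct (Nat.eq_dec i N) as [->|]; [lia|]. specialize (IH ltac:(lia)); lia.
Qed.

Lemma sum_below_le_except f g p N :
  (forall j, j <> p -> f j <= g j) -> sum_below f N <= f p + sum_below g N.
Proof.
  intros H.
  assert (Hle : forall M, M <= p -> sum_below f M <= sum_below g M).
  { induction M; intros; simpl; [lia|]. specialize (H M ltac:(lia)); specialize (IHM ltac:(lia)); lia. }
  induction N as [|N IH]; simpl; [lia|].
  destruct (Nat.eq_dec N p) as [->|Hn].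
  - specialize (Hle p (le_n _)); lia.
  - specialize (H N Hn); lia.
Qed.

Lemma stirling2_eq_0 M p : M < p -> stirling2 M p = 0.
Proof.
  revert p; induction M; intros p H; destruct p; simpl; try lia.
  rewrite !IHM by lia; lia.
Qed.

Lemma stirling2_pos M p : 1 <= p <= M -> 0 < stirling2 M p.
Proof.
  revert p; induction M; intros p Hp; [lia|]. destruct p as [|[|p]]; [lia| |]; simpl.
  - destruct M; simpl; [lia|]. specialize (IHM 1). simpl in IHM; lia.
  - specialize (IHM (S p) ltac:(lia)); lia.
Qed.

Lemma pow_eq_sum_falling_stirling2 M N x :
  M < N -> x ^ M = sum_below (fun j => falling x j * stirling2 M j) N.
Proof.
  revert N; induction M as [|M IH]; intros N HN.
  - destruct N as [|N]; [lia|].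
    rewrite sum_below_succ_l, (sum_below_ext _ (fun _ => 0 * 0)) by (intros; simpl; lia).
    rewrite sum_below_mul_l; reflexivity.
  - destruct N as [|N]; [lia|].
    rewrite Nat.pow_succ_r', (IH (S N)), <- sum_below_mul_l by lia.
    rewrite (sum_below_ext _
      (fun j => falling x (S j) * stirling2 M j + j * falling x j * stirling2 M j))
      by (intros; rewrite Nat.mul_assoc, mul_falling; lia).
    rewrite sum_below_add, sum_below_succ_l,
      (sum_below_succ_l (fun j => falling x j * stirling2 (S M) j)).
    simpl (stirling2 (S M) 0); rewrite Nat.mul_0_r, Nat.add_0_l.
    rewrite (sum_below_ext (fun j => falling x (S j) * stirling2 (S M) (S j))
         (fun j => falling x (S j) * stirling2 M j + (S j * falling x (S j) * stirling2 M (S j))))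
      by (intros; simpl stirling2; nia).
    rewrite sum_below_add, (sum_below_succ_l (fun j => j * falling x j * stirling2 M j)).
    rewrite <- (sum_below_succ_l (fun j => falling x (S j) * stirling2 M j)).
    change (sum_below (fun j => falling x (S j) * stirling2 M j) (S N)) with
      (sum_below (fun j => falling x (S j) * stirling2 M j) N + falling x (S N) * stirling2 M N).
    rewrite (stirling2_eq_0 M N) by lia; lia.
Qed.

Lemma fact_stirling2_le_pow M p : fact p * stirling2 M p <= p ^ M.
Proof.
  destruct (le_lt_dec p M).
  - rewrite (pow_eq_sum_falling_stirling2 M (S M) p), <- falling_diag by lia.
    apply (le_sum_below (fun j => falling p j * stirling2 M j)); lia.
  - rewrite stirling2_eq_0 by lia; lia.
Qed.

(* Term by term, falling p j <= p * falling (p-1) j except for j = p. *)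
Lemma pow_le_fact_stirling2 M p : 1 <= p ->
  p ^ M <= fact p * stirling2 M p + p * (p - 1) ^ M.
Proof.
  intros Hp; destruct p as [|q]; [lia|].
  rewrite (pow_eq_sum_falling_stirling2 M (S (M + S q)) (S q)) by lia.
  replace (S q - 1) with q by lia.
  rewrite (pow_eq_sum_falling_stirling2 M (S (M + S q)) q), <- sum_below_mul_l, <- falling_diag by lia.
  apply (sum_below_le_except (fun j => falling (S q) j * stirling2 M j)
           (fun j => S q * (falling q j * stirling2 M j))); intros j Hj.
  rewrite Nat.mul_assoc; apply Nat.mul_le_mono_r, falling_succ_le; auto.
Qed.

Lemma binom_0_r n : binom n 0 = 1.
Proof. destruct n; reflexivity. Qed.

Lemma binom_eq_0 n k : n < k -> binom n k = 0.
Proof.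
  revert k; induction n; intros k H; destruct k; simpl; try lia.
  rewrite !IHn by lia; lia.
Qed.

Lemma binom_1_r n : binom n 1 = n.
Proof. induction n; simpl; auto. rewrite binom_0_r, IHn; lia. Qed.

Lemma binom_succ_mul n k : binom n (S k) * S k = binom n k * (n - k).
Proof.
  revert k; induction n; intros k.
  - destruct k; simpl; lia.
  - destruct k as [|k].
    + simpl; rewrite binom_0_r, binom_1_r; lia.
    + change (binom (S n) (S (S k))) with (binom n (S k) + binom n (S (S k))).
      change (binom (S n) (S k)) with (binom n k + binom n (S k)).
      pose proof (IHn k) as H1; pose proof (IHn (S k)) as H2.
      destruct (le_lt_dec n k).
      * rewrite (binom_eq_0 n (S k)), (binom_eq_0 n (S (S k))) by lia.
        replace (S n - S k) with 0 by lia; lia.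
      * replace (S n - S k) with (n - k) by lia.
        replace (n - S k) with (n - k - 1) in H2 by lia.
        replace (n - k) with (S (n - k - 1)) in * by lia; nia.
Qed.

Open Scope Z_scope.

Definition alt_term (c : nat -> Z) (j : nat) : Z := (-1) ^ (Z.of_nat j - 1) * c j.

Definition alt_sum (c : nat -> Z) (i len : nat) : Z :=
  fold_right Z.add 0 (map (alt_term c) (seq i len)).

Lemma alt_sign_succ i : (1 <= i)%nat ->
  (-1) ^ (Z.of_nat (S i) - 1) = - (-1) ^ (Z.of_nat i - 1).
Proof.
  intros Hi; replace (Z.of_nat (S i) - 1) with (Z.succ (Z.of_nat i - 1)) by lia.
  rewrite Z.pow_succ_r by lia; ring.
Qed.

Lemma alt_sign_cases i : (1 <= i)%nat ->
  (-1) ^ (Z.of_nat i - 1) = 1 \/ (-1) ^ (Z.of_nat i - 1) = -1.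
Proof.
  induction i as [|[|i] IH]; intros Hi; [lia|now left|].
  rewrite alt_sign_succ by lia; destruct (IH ltac:(lia)) as [-> | ->]; lia.
Qed.

Lemma alt_sum_bounds c len i : (1 <= i)%nat -> (forall j, 0 <= c j) ->
  (forall j, (i <= j)%nat -> c (S j) <= c j) ->
  0 <= (-1) ^ (Z.of_nat i - 1) * alt_sum c i len <= c i.
Proof.
  revert i; induction len as [|len IH]; intros i Hi Hpos Hdec.
  - unfold alt_sum; simpl; specialize (Hpos i); lia.
  - unfold alt_sum; simpl; fold (alt_sum c (S i) len); unfold alt_term.
    specialize (IH (S i) ltac:(lia) Hpos ltac:(intros; apply Hdec; lia)).
    rewrite alt_sign_succ in IH by lia.
    pose proof (Hdec i (le_n _)); pose proof (Hpos i).
    destruct (alt_sign_cases i Hi) as [E|E]; rewrite E in *; nia.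
Qed.

Close Scope Z_scope.
Open Scope R_scope.

Lemma fact_stirling2_le_pow_R M p : INR (fact p) * INR (stirling2 M p) <= INR p ^ M.
Proof. rewrite <- mult_INR, <- pow_INR; apply le_INR, fact_stirling2_le_pow. Qed.

Lemma pow_le_fact_stirling2_R M p : (1 <= p)%nat ->
  INR p ^ M <= INR (fact p) * INR (stirling2 M p) + INR p * (INR p - 1) ^ M.
Proof.
  intros Hp.
  replace (INR p - 1) with (INR (p - 1)) by (rewrite minus_INR by lia; reflexivity).
  rewrite <- !pow_INR, <- !mult_INR, <- plus_INR; apply le_INR, pow_le_fact_stirling2; auto.
Qed.

Lemma pow_le_pow_of_le_1 x y E M : 0 <= x <= y -> y <= 1 -> (E <= M)%nat -> x ^ M <= y ^ E.
Proof.
  intros Hxy Hy1 HEM.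
  apply Rle_trans with (y ^ M); [apply pow_incr; lra|].
  replace M with (E + (M - E))%nat by lia; rewrite pow_add.
  assert (0 <= y ^ E) by (apply pow_le; lra).
  assert (y ^ (M - E) <= 1) by (rewrite <- (pow1 (M - E)); apply pow_incr; lra).
  assert (0 <= y ^ (M - E)) by (apply pow_le; lra).
  nra.
Qed.

Lemma pred_div_le p K : (1 <= p <= K)%nat ->
  0 <= (INR p - 1) / INR p <= (INR K - 1) / INR K /\ (INR K - 1) / INR K <= 1.
Proof.
  intros [H1 H2]; apply le_INR in H1, H2; simpl in H1.
  assert (/ INR K <= / INR p) by (apply Rinv_le_contravar; lra).
  assert (0 < / INR K) by (apply Rinv_0_lt_compat; lra).
  assert (0 < / INR p) by (apply Rinv_0_lt_compat; lra).
  replace ((INR p - 1) / INR p) with (1 - / INR p) by (field; lra).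
  replace ((INR K - 1) / INR K) with (1 - / INR K) by (field; lra).
  assert (INR p * / INR p = 1) by (field; lra).
  repeat split; nra.
Qed.

Definition beta (K e : nat) : R := ((INR K - 1) / INR K) ^ e.

Section Beta.
Variables K e : nat.
Hypothesis HK : (1 <= K)%nat.

Lemma beta_nonneg : 0 <= beta K e.
Proof. apply pow_le; apply (pred_div_le K K); lia. Qed.

Lemma pow_pred_le_beta_pow p M : (1 <= p <= K)%nat -> (e <= M)%nat ->
  (INR p - 1) ^ M <= beta K e * INR p ^ M.
Proof.
  intros Hp HM.
  assert (Hpr : 1 <= INR p) by (apply (le_INR 1); lia).
  replace (INR p - 1) with ((INR p - 1) / INR p * INR p) by (field; lra).
  rewrite Rpow_mult_distr; apply Rmult_le_compat_r; [apply pow_le; lra|].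
  destruct (pred_div_le p K Hp); apply pow_le_pow_of_le_1; auto.
Qed.

Lemma stirling2_lower p M : (1 <= p <= K)%nat -> (e <= M)%nat ->
  INR p ^ M * (1 - INR K * beta K e) <= INR (fact p) * INR (stirling2 M p).
Proof.
  intros Hp HM.
  pose proof (pow_le_fact_stirling2_R M p ltac:(lia)).
  pose proof (pow_pred_le_beta_pow p M Hp HM).
  pose proof beta_nonneg; pose proof (pow_le (INR p) M (pos_INR p)).
  assert (INR p <= INR K) by (apply le_INR; lia).
  assert (0 <= INR p) by apply pos_INR.
  assert (INR p * (INR p - 1) ^ M <= INR K * (beta K e * INR p ^ M)).
  { assert (1 <= INR p) by (apply (le_INR 1); lia).
    apply Rmult_le_compat; auto; apply pow_le; lra. }
  nra.
Qed.

(* Compare q! S(M,q) <= q^M with the lower bound for (q+1)! S(M+1,q+1);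
   the factor (q/(q+1))^M is at most beta. *)
Lemma stirling2_ratio q M : (q < K)%nat -> (e <= M)%nat ->
  INR (stirling2 M q) * (1 - INR K * beta K e) <= beta K e * INR (stirling2 (S M) (S q)).
Proof.
  intros Hq HM.
  set (x := INR (S q)).
  pose proof (fact_stirling2_le_pow_R M q) as Hup.
  pose proof (stirling2_lower (S q) (S M) ltac:(lia) ltac:(lia)) as Hlow.
  pose proof (pow_pred_le_beta_pow (S q) M ltac:(lia) HM) as Hbeta.
  fold x in Hlow, Hbeta.
  replace (INR q) with (x - 1) in Hup by (unfold x; rewrite S_INR; ring).
  change (fact (S q)) with (S q * fact q)%nat in Hlow; rewrite mult_INR in Hlow; fold x in Hlow.
  assert (Hx : 0 < x ^ S M) by (apply pow_lt, lt_0_INR; lia).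
  assert (0 < x) by (apply lt_0_INR; lia).
  pose proof (pos_INR (stirling2 M q)); pose proof (pos_INR (stirling2 (S M) (S q))).
  pose proof (INR_fact_lt_0 q); pose proof beta_nonneg.
  apply Rmult_le_reg_r with (x ^ S M); auto.
  apply Rle_trans with (INR (stirling2 M q) * (x * INR (fact q) * INR (stirling2 (S M) (S q)))).
  { rewrite Rmult_assoc, (Rmult_comm _ (x ^ S M)); apply Rmult_le_compat_l; auto. }
  apply Rle_trans with (x * (x - 1) ^ M * INR (stirling2 (S M) (S q))).
  { replace (INR (stirling2 M q) * (x * INR (fact q) * INR (stirling2 (S M) (S q))))
      with (x * INR (stirling2 (S M) (S q)) * (INR (fact q) * INR (stirling2 M q))) by ring.
    replace (x * (x - 1) ^ M * INR (stirling2 (S M) (S q)))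
      with (x * INR (stirling2 (S M) (S q)) * (x - 1) ^ M) by ring.
    apply Rmult_le_compat_l; [nra|auto]. }
  replace (beta K e * INR (stirling2 (S M) (S q)) * x ^ S M)
    with (x * (beta K e * x ^ M) * INR (stirling2 (S M) (S q))) by (simpl; ring).
  apply Rmult_le_compat_r; auto; apply Rmult_le_compat_l; lra.
Qed.

End Beta.

Lemma ln_le_ln x y : 0 < x -> x <= y -> ln x <= ln y.
Proof. intros Hx [Hxy|<-]; [left; apply ln_increasing; auto|lra]. Qed.

Lemma ln2_pos : 0 < ln 2.
Proof. pose proof ln_lt_2; lra. Qed.

Lemma le_log2 (c : nat) x : 2 ^ c <= x -> INR c <= log2 x.
Proof.
  intros Hx; pose proof ln2_pos.
  assert (0 < 2 ^ c) by (apply pow_lt; lra).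
  unfold log2, Rdiv; apply Rmult_le_reg_r with (ln 2); auto.
  rewrite Rmult_assoc, Rinv_l, Rmult_1_r by lra.
  rewrite <- ln_pow by lra; apply ln_le_ln; auto.
Qed.

(* Bernoulli: (1 + 1/(K-1))^(K-1) >= 2. *)
Lemma ln2_le_mul_ln_ratio K : (2 <= K)%nat -> ln 2 <= (INR K - 1) * ln (INR K / (INR K - 1)).
Proof.
  intros HK; apply le_INR in HK; simpl in HK.
  assert (HK1 : INR K - 1 = INR (K - 1))
    by (rewrite minus_INR by (apply INR_le; simpl; lra); reflexivity).
  pose proof (poly (K - 1) (1 / (INR K - 1)) ltac:(apply Rdiv_lt_0_compat; lra)) as Hb.
  rewrite <- HK1 in Hb.
  replace (1 + (INR K - 1) * (1 / (INR K - 1))) with 2 in Hb by (field; lra).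
  replace (1 + 1 / (INR K - 1)) with (INR K / (INR K - 1)) in Hb by (field; lra).
  apply ln_le_ln in Hb; [|lra]; rewrite ln_pow in Hb by (apply Rdiv_lt_0_compat; lra).
  rewrite <- HK1 in Hb; exact Hb.
Qed.

Lemma beta_mul_sqr_le K e X : (2 <= K)%nat -> 1 <= X ->
  (INR K - 1) * (2 * log2 X - 1) <= INR e -> beta K e * X ^ 2 <= 2.
Proof.
  intros HK HX He; pose proof ln2_pos as Hl2.
  pose proof (ln2_le_mul_ln_ratio K HK) as Hr.
  assert (HKr : 2 <= INR K) by (apply (le_INR 2) in HK; exact HK).
  assert (Hq : 0 < INR K / (INR K - 1)) by (apply Rdiv_lt_0_compat; lra).
  assert (Hb : 0 < beta K e) by (apply pow_lt, Rdiv_lt_0_compat; lra).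
  set (D := ln (INR K / (INR K - 1))) in *.
  assert (Hlnb : ln (beta K e) = - INR e * D).
  { unfold beta, D; rewrite ln_pow by (apply Rdiv_lt_0_compat; lra).
    replace ((INR K - 1) / INR K) with (/ (INR K / (INR K - 1))) by (field; lra).
    rewrite ln_Rinv by auto; ring. }
  assert (HlX : 2 * log2 X * ln 2 = 2 * ln X) by (unfold log2; field; lra).
  assert (Hmain : 2 * ln X <= ln 2 + INR e * D).
  { assert (0 <= INR e) by apply pos_INR.
    assert (INR e * ln 2 <= INR e * ((INR K - 1) * D)) by (apply Rmult_le_compat_l; auto).
    assert ((INR K - 1) * (2 * log2 X - 1) * ln 2 <= INR e * ln 2)
      by (apply Rmult_le_compat_r; lra).
    apply Rmult_le_reg_l with (INR K - 1); [lra|].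
    replace (2 * ln X) with ((2 * log2 X - 1) * ln 2 + ln 2) by (rewrite <- HlX; ring).
    nra. }
  destruct (Rle_or_lt (beta K e * X ^ 2) 2) as [|Hgt]; auto.
  apply ln_increasing in Hgt; [|lra].
  assert (0 < X ^ 2) by (apply pow_lt; lra).
  rewrite ln_mult, ln_pow, Hlnb in Hgt by lra.
  simpl (INR 2) in Hgt; lra.
Qed.

Lemma Lkt_sub k t : (t <= k)%nat ->
  Lkt k t = INR t + 1 + (INR (k - t) + 1) * log2 ((INR t + 1) * (INR (k - t) + 1)).
Proof. intros; unfold Lkt; rewrite minus_INR by auto; ring. Qed.

Lemma le_of_Lkt n k t c : (t + 2 <= k)%nat -> INR n >= 2 * Lkt k t ->
  (2 ^ c <= (t + 1) * (k - t + 1))%nat ->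
  (2 * (t + 1) + 2 * (k - t + 1) * c <= n)%nat.
Proof.
  intros Htk Hn Hc; rewrite Lkt_sub in Hn by lia.
  apply le_INR in Hc; rewrite pow_INR, mult_INR, !plus_INR in Hc; change (INR 1) with 1 in Hc.
  change (INR 2) with 2 in Hc.
  apply le_log2 in Hc; apply INR_le.
  rewrite plus_INR, !mult_INR, !plus_INR; simpl (INR 1); simpl (INR 2).
  pose proof (pos_INR (k - t)); nra.
Qed.

Lemma beta_small_of_Lkt n k t : (t + 2 <= k)%nat -> INR n >= 2 * Lkt k t ->
  beta (k - t) (n - t - (k - t)) * ((INR t + 1) * (INR (k - t) + 1)) ^ 2 <= 2.
Proof.
  intros Htk Hn.
  pose proof (le_of_Lkt n k t 1 Htk Hn ltac:(simpl; nia)) as Hn1.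
  set (X := (INR t + 1) * (INR (k - t) + 1)).
  assert (HX : 2 ^ 1 <= X).
  { assert (2 <= INR (k - t)) by (apply (le_INR 2); lia).
    pose proof (pos_INR t); unfold X; simpl; nra. }
  apply beta_mul_sqr_le; [lia|simpl in HX; lra|].
  apply le_log2 in HX; simpl (INR 1) in HX.
  rewrite Lkt_sub in Hn by lia; fold X in Hn.
  rewrite !minus_INR by lia; rewrite minus_INR in Hn by lia.
  pose proof (pos_INR t); nra.
Qed.

Open Scope nat_scope.

Lemma two_mul_pow_lt t L m : 2 <= L -> t + L + 2 <= m -> 2 * t * L ^ S L < L ^ m.
Proof.
  intros HL Hm.
  assert (Ht : 2 * t < L ^ (m - S L)).
  { assert (t < 2 ^ t) by (apply Nat.pow_gt_lin_r; lia).
    apply Nat.lt_le_trans with (2 ^ S t); [simpl; lia|].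
    apply Nat.le_trans with (L ^ S t); [apply Nat.pow_le_mono_l; lia|].
    apply Nat.pow_le_mono_r; lia. }
  replace m with ((m - S L) + S L) by lia; rewrite Nat.pow_add_r.
  assert (0 < L ^ S L) by (apply Nat.neq_0_lt_0, Nat.pow_nonzero; lia).
  nia.
Qed.

Lemma eight_mul_pow3_le_pow4 d : 9 <= d -> 8 * 3 ^ d <= 4 ^ d.
Proof.
  induction 1 as [|d _ IH]; [|rewrite !Nat.pow_succ_r'; lia].
  assert (H : 2 * 3 ^ 3 <= 4 ^ 3) by (simpl; lia).
  apply (Nat.pow_le_mono_l _ _ 3) in H.
  rewrite Nat.pow_mul_l, <- !Nat.pow_mul_r in H; exact H.
Qed.

(* (K-1)(L-1) <= (K-2)L is equivalent to L + 1 <= K. *)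
Lemma pow_sub1_mul_pow_sub1_le m K L : 2 <= L -> L + 1 <= K -> 2 <= m ->
  4 * (K - 1) ^ (m - 2) * (L - 1) ^ (m - 1) <= (K - 2) ^ (m - 2) * L ^ m.
Proof.
  intros HL HLK Hm.
  assert (E1 : L ^ m = L ^ (m - 2) * (L * L))
    by (replace m with ((m - 2) + 2) at 1 by lia; rewrite Nat.pow_add_r; simpl; lia).
  assert (E2 : (L - 1) ^ (m - 1) = (L - 1) ^ (m - 2) * (L - 1))
    by (replace (m - 1) with ((m - 2) + 1) by lia; rewrite Nat.pow_add_r; simpl; lia).
  rewrite E1, E2.
  assert (H : ((K - 1) * (L - 1)) ^ (m - 2) <= ((K - 2) * L) ^ (m - 2))
    by (apply Nat.pow_le_mono_l; nia).
  rewrite !Nat.pow_mul_l in H.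
  assert (4 * (L - 1) <= L * L) by nia.
  nia.
Qed.

Lemma pow_sub1_mul_fact_le m K L : 2 <= L -> L + 1 <= K -> 4 <= K -> 2 * L + 6 <= m -> 11 <= m ->
  16 * (K - 1) ^ (m - 2) * fact L <= (K - 2) ^ (m - 2) * L ^ m.
Proof.
  intros HL HLK HK Hm Hm11.
  set (d := m - 2).
  destruct (Nat.eq_dec L 2) as [->|HL3].
  - (* (4/3)^d >= 8 for d >= 9, and 4(K-1) <= 6(K-2) *)
    change (fact 2) with 2.
    assert (E : 2 ^ m = 2 ^ d * 4)
      by (unfold d; replace m with ((m - 2) + 2) at 1 by lia; rewrite Nat.pow_add_r; simpl; lia).
    rewrite E.
    pose proof (eight_mul_pow3_le_pow4 d ltac:(unfold d; lia)) as H48.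
    assert (H : (4 * (K - 1)) ^ d <= (3 * (2 * (K - 2))) ^ d) by (apply Nat.pow_le_mono_l; lia).
    rewrite !Nat.pow_mul_l in H.
    assert (0 < 3 ^ d) by (apply Nat.neq_0_lt_0, Nat.pow_nonzero; lia).
    assert (8 * (K - 1) ^ d <= 2 ^ d * (K - 2) ^ d) by (apply (Nat.mul_le_mono_pos_r _ _ (3 ^ d)); nia).
    nia.
  - (* L! <= L^L <= (L-1)^(2L) and (L-1)^4 >= 16 *)
    assert (H1 : ((K - 1) * (L - 1)) ^ d <= ((K - 2) * L) ^ d) by (apply Nat.pow_le_mono_l; nia).
    rewrite !Nat.pow_mul_l in H1.
    assert (H2 : L ^ d <= L ^ m) by (apply Nat.pow_le_mono_r; unfold d; lia).
    assert (H3 : L ^ L <= ((L - 1) * (L - 1)) ^ L) by (apply Nat.pow_le_mono_l; nia).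
    rewrite Nat.pow_mul_l, <- Nat.pow_add_r in H3.
    assert (H4 : 16 <= (L - 1) ^ 4)
      by (apply Nat.le_trans with (2 ^ 4); [simpl; lia|apply Nat.pow_le_mono_l; lia]).
    assert (H5 : (L - 1) ^ 4 * (L - 1) ^ (L + L) <= (L - 1) ^ d)
      by (rewrite <- Nat.pow_add_r; apply Nat.pow_le_mono_r; unfold d; lia).
    pose proof (fact_le_pow L).
    assert (16 * fact L <= (L - 1) ^ d) by nia.
    nia.
Qed.

Lemma pow_sub1_mul_add_fact_le m K L : 2 <= L -> L + 1 <= K -> 4 <= K -> 2 * L + 6 <= m ->
  11 <= m -> 16 * ((K - 1) ^ (m - 2) * ((L - 1) ^ (m - 1) + fact L)) <= 5 * ((K - 2) ^ (m - 2) * L ^ m).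
Proof.
  intros; pose proof (pow_sub1_mul_pow_sub1_le m K L); pose proof (pow_sub1_mul_fact_le m K L); nia.
Qed.

Open Scope R_scope.

Lemma INR_fact_pred p : (1 <= p)%nat -> INR (fact p) = INR p * INR (fact (p - 1)).
Proof.
  intros; replace p with (S (p - 1)) at 1 by lia.
  rewrite fact_simpl, mult_INR; do 2 f_equal; lia.
Qed.

Lemma INR_binom_succ_mul L j :
  INR (binom L (S j)) * INR (S j) = INR (binom L j) * (INR L - INR j).
Proof.
  destruct (le_lt_dec j L).
  - rewrite <- minus_INR, <- !mult_INR by auto; f_equal; apply binom_succ_mul.
  - rewrite !binom_eq_0 by lia; simpl; ring.
Qed.

Open Scope Z_scope.

Lemma alt_product_gt a1 c2 R S S1 L t : 0 <= t -> t + 2 <= L -> 0 <= c2 < a1 -> 0 <= R ->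
  0 < S -> 0 <= S1 -> a1 * ((t + 1) * S - t * S1) < (L * a1 - c2 + R) * (S + t).
Proof.
  intros Ht HL Hc HR HS HS1.
  assert ((t + 1) * a1 < L * a1 - c2 + R) by nia.
  assert (0 <= a1 * t * S1) by (repeat apply Z.mul_nonneg_nonneg; lia).
  nia.
Qed.

Lemma alt_product_lt_of_le a1 c2 R S S1 L t : 0 <= t -> L <= t -> 0 < a1 -> R <= c2 ->
  0 <= S -> t * (S1 + L) < S -> (L * a1 - c2 + R) * (S + t) < a1 * ((t + 1) * S - t * S1).
Proof. intros; nia. Qed.

Lemma alt_product_lt_of_eq a1 c2 c3 R S S1 L t : 0 <= t -> L = t + 1 -> R <= c3 <= c2 ->
  0 <= S -> t * a1 * (S1 + L) < (c2 - c3) * S ->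
  (L * a1 - c2 + R) * (S + t) < a1 * ((t + 1) * S - t * S1).
Proof. intros; nia. Qed.

Close Scope Z_scope.

Section Estimates.
Variables m K L t : nat.
Hypothesis HL2 : (2 <= L)%nat.
Hypothesis HLK : (L <= K)%nat.
Hypothesis Hm : (t + 2 * K + 4 <= m)%nat.
Hypothesis Hbeta : beta K (m - K) * ((INR t + 1) * (INR K + 1)) ^ 2 <= 2.

Let b := beta K (m - K).

Definition stirling_shift (j : nat) : nat := stirling2 (m - j) (K - j).

Definition r1_term (j : nat) : Z := Z.of_nat (binom L j * stirling_shift j).

Definition r1_reduced : Z :=
  (alt_sum r1_term 1 L * (Z.of_nat (stirling2 m L) + Z.of_nat t))%Z.

Definition r2_reduced : Z :=
  (Z.of_nat (stirling_shift 1) *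
   ((Z.of_nat t + 1) * Z.of_nat (stirling2 m L) - Z.of_nat t * Z.of_nat (stirling2 (m - 1) (L - 1))))%Z.

Lemma b_nonneg : 0 <= b.
Proof. apply beta_nonneg; lia. Qed.

Lemma b_mul_sqr_le : b * (INR K + 1) ^ 2 <= 2.
Proof.
  pose proof b_nonneg; pose proof (pos_INR t); pose proof (pos_INR K).
  apply Rle_trans with (b * ((INR t + 1) * (INR K + 1)) ^ 2); auto.
  apply Rmult_le_compat_l; auto; apply pow_incr; nra.
Qed.

Lemma K_add_t_mul_b_le : 2 * (INR K + INR t) * b <= 1.
Proof.
  pose proof b_nonneg; pose proof Hbeta as HB; fold b in HB.
  assert (HK : INR 2 <= INR K) by (apply le_INR; lia); simpl (INR 2) in HK.
  pose proof (pos_INR t).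
  assert (4 * (INR K + INR t) <= ((INR t + 1) * (INR K + 1)) ^ 2) by (simpl; nra).
  assert (4 * (INR K + INR t) * b <= ((INR t + 1) * (INR K + 1)) ^ 2 * b)
    by (apply Rmult_le_compat_r; lra).
  lra.
Qed.

Lemma stirling_shift_ratio j : (j < K)%nat ->
  INR (stirling_shift (S j)) * (1 - INR K * b) <= b * INR (stirling_shift j).
Proof.
  intros Hj; unfold stirling_shift.
  pose proof (stirling2_ratio K (m - K) ltac:(lia) (K - S j) (m - S j) ltac:(lia) ltac:(lia)) as R.
  replace (S (m - S j)) with (m - j)%nat in R by lia.
  replace (S (K - S j)) with (K - j)%nat in R by lia.
  exact R.
Qed.

Lemma r1_term_succ_le j : (2 <= j)%nat -> (r1_term (S j) <= r1_term j)%Z.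
Proof.
  intros Hj; unfold r1_term; apply Nat2Z.inj_le.
  destruct (le_lt_dec L j) as [HLj|HLj]; [rewrite binom_eq_0 by lia; lia|].
  apply INR_le; rewrite !mult_INR.
  pose proof (stirling_shift_ratio j ltac:(lia)) as Hr.
  pose proof (INR_binom_succ_mul L j) as Hbin.
  pose proof K_add_t_mul_b_le; pose proof b_nonneg.
  assert (0 <= INR t * b) by (apply Rmult_le_pos; [apply pos_INR|auto]).
  assert (HjL : INR j <= INR L) by (apply le_INR; lia).
  assert (HLKr : INR L <= INR K) by (apply le_INR; lia).
  assert (Hj3 : INR 3 <= INR (S j)) by (apply le_INR; lia); simpl (INR 3) in Hj3.
  pose proof (pos_INR (binom L j)); pose proof (pos_INR (stirling_shift j)); pose proof (pos_INR j).
  set (B1 := INR (binom L (S j))) in *; set (B0 := INR (binom L j)) in *.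
  set (x := INR (stirling_shift (S j))) in *; set (y := INR (stirling_shift j)) in *.
  assert ((INR L - INR j) * b <= INR K * b) by (apply Rmult_le_compat_r; lra).
  assert (Hw : (INR L - INR j) * b <= INR (S j) * (1 - INR K * b)) by nra.
  assert (Hpos : 0 < INR (S j) * (1 - INR K * b)) by nra.
  apply Rmult_le_reg_r with (INR (S j) * (1 - INR K * b)); auto.
  apply Rle_trans with (B0 * (INR L - INR j) * (x * (1 - INR K * b))); [right; rewrite <- Hbin; ring|].
  apply Rle_trans with (B0 * (INR L - INR j) * (b * y)); [apply Rmult_le_compat_l; nra|].
  replace (B0 * (INR L - INR j) * (b * y)) with (B0 * y * ((INR L - INR j) * b)) by ring.
  apply Rmult_le_compat_l; nra.
Qed.

Lemma stirling_shift_1_pos : (0 < stirling_shift 1)%nat.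
Proof. apply stirling2_pos; lia. Qed.

Lemma r1_term_2_lt : (r1_term 2 < Z.of_nat (stirling_shift 1))%Z.
Proof.
  unfold r1_term; apply Nat2Z.inj_lt, INR_lt; rewrite mult_INR.
  pose proof (stirling_shift_ratio 1 ltac:(lia)) as Hr.
  pose proof (INR_binom_succ_mul L 1) as Hbin; rewrite binom_1_r in Hbin; simpl (INR 1) in Hbin.
  pose proof b_mul_sqr_le; pose proof b_nonneg.
  pose proof (lt_0_INR _ stirling_shift_1_pos) as Ha1.
  pose proof (pos_INR (stirling_shift 2)).
  assert (HLKr : INR L <= INR K) by (apply le_INR; lia).
  assert (HL2r : 2 <= INR L) by (apply (le_INR 2); lia).
  pose proof (pos_INR (binom L 2)).
  set (B2 := INR (binom L 2)) in *.
  assert (HB2 : B2 <= INR K * (INR K - 1) / 2) by (change (INR (S 1)) with 2 in Hbin; nra).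
  assert (Hsum : (B2 + INR K) * b < 1).
  { assert (B2 + INR K <= INR K * (INR K + 1) / 2) by lra.
    destruct H0 as [Hb|<-]; [|lra].
    assert ((B2 + INR K) * b <= INR K * (INR K + 1) / 2 * b) by (apply Rmult_le_compat_r; lra).
    assert (INR K * (INR K + 1) / 2 * b < (INR K + 1) ^ 2 / 2 * b) by (apply Rmult_lt_compat_r; nra).
    lra. }
  apply Rmult_lt_reg_r with (1 - INR K * b); [nra|].
  apply Rle_lt_trans with (B2 * (b * INR (stirling_shift 1))).
  { rewrite Rmult_assoc; apply Rmult_le_compat_l; [nra|auto]. }
  nra.
Qed.

Lemma mul_stirling2_pred_lt : (L <= t)%nat ->
  (t * (stirling2 (m - 1) (L - 1) + L) < stirling2 m L)%nat.
Proof.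
  intros HLt; apply INR_lt; rewrite mult_INR, plus_INR.
  pose proof b_nonneg.
  assert (Hx : INR 2 <= INR L) by (apply le_INR; lia); simpl (INR 2) in Hx.
  assert (Ht : INR L <= INR t) by (apply le_INR; lia).
  pose proof (two_mul_pow_lt t L m ltac:(lia) ltac:(lia)) as Hnat.
  apply lt_INR in Hnat; rewrite !mult_INR, !pow_INR in Hnat; simpl (INR 2) in Hnat.
  pose proof (fact_le_pow L) as HF; apply le_INR in HF; rewrite pow_INR in HF.
  pose proof (stirling2_lower K (m - K) ltac:(lia) L m ltac:(lia) ltac:(lia)) as Hlow.
  pose proof (fact_stirling2_le_pow_R (m - 1) (L - 1)) as Hup.
  pose proof (pow_pred_le_beta_pow K (m - K) ltac:(lia) L (m - 1) ltac:(lia) ltac:(lia)) as Hpred.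
  replace (INR (L - 1)) with (INR L - 1) in Hup by (rewrite minus_INR by lia; reflexivity).
  pose proof (INR_fact_pred L ltac:(lia)) as HfL.
  assert (Hpow : INR L ^ m = INR L * INR L ^ (m - 1))
    by (replace m with (S (m - 1)) at 1 by lia; reflexivity).
  pose proof K_add_t_mul_b_le.
  fold b in Hlow, Hpred.
  set (x := INR L) in *; set (Fp := INR (fact (L - 1))) in *; set (F := INR (fact L)) in *.
  set (S1 := INR (stirling2 (m - 1) (L - 1))) in *; set (S0 := INR (stirling2 m L)) in *.
  assert (HF0 : 0 < F) by apply INR_fact_lt_0.
  assert (Hxm : 0 < x ^ m) by (apply pow_lt; lra).
  assert (H1 : INR t * x * (Fp * S1) <= INR t * b * x ^ m).
  { rewrite Hpow; replace (INR t * b * (x * x ^ (m - 1))) with (INR t * x * (b * x ^ (m - 1))) by ring.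
    apply Rmult_le_compat_l; [nra|lra]. }
  assert (H2 : 2 * (INR t * x * F) < x ^ m).
  { apply Rle_lt_trans with (2 * INR t * (x * x ^ L)); [|exact Hnat].
    replace (2 * (INR t * x * F)) with (2 * INR t * (x * F)) by ring.
    apply Rmult_le_compat_l; [lra|apply Rmult_le_compat_l; lra]. }
  apply Rmult_lt_reg_r with F; auto.
  replace (INR t * (S1 + x) * F) with (INR t * x * (Fp * S1) + INR t * x * F) by (rewrite HfL; ring).
  nra.
Qed.

Lemma alt_sum_r1_term_split :
  alt_sum r1_term 1 L =
    (Z.of_nat L * Z.of_nat (stirling_shift 1) - r1_term 2 + alt_sum r1_term 3 (L - 2))%Z.
Proof.
  replace L with (S (S (L - 2))) at 1 by lia.
  unfold alt_sum; cbn [seq map fold_right]; fold (alt_sum r1_term 3 (L - 2)).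
  unfold alt_term at 1 2; change ((-1) ^ (Z.of_nat 1 - 1))%Z with 1%Z.
  change ((-1) ^ (Z.of_nat 2 - 1))%Z with (-1)%Z.
  unfold r1_term at 1; rewrite binom_1_r, Nat2Z.inj_mul; ring.
Qed.

Lemma alt_sum_r1_term_tail :
  (0 <= alt_sum r1_term 3 (L - 2) <= r1_term 3 /\ r1_term 3 <= r1_term 2)%Z.
Proof.
  pose proof (alt_sum_bounds r1_term (L - 2) 3 ltac:(lia) ltac:(intros; unfold r1_term; lia)
                ltac:(intros; apply r1_term_succ_le; lia)) as H.
  change ((-1) ^ (Z.of_nat 3 - 1))%Z with 1%Z in H.
  split; [lia|apply r1_term_succ_le; lia].
Qed.

Lemma r2_reduced_lt_r1_reduced : (t + 2 <= L)%nat -> (r2_reduced < r1_reduced)%Z.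
Proof.
  intros HtL; unfold r1_reduced, r2_reduced; rewrite alt_sum_r1_term_split.
  pose proof alt_sum_r1_term_tail; pose proof r1_term_2_lt.
  pose proof (stirling2_pos m L ltac:(lia)).
  apply alt_product_gt; lia.
Qed.

Lemma r1_reduced_lt_r2_reduced_of_le : (L <= t)%nat -> (r1_reduced < r2_reduced)%Z.
Proof.
  intros HLt; unfold r1_reduced, r2_reduced; rewrite alt_sum_r1_term_split.
  pose proof alt_sum_r1_term_tail; pose proof stirling_shift_1_pos.
  pose proof (mul_stirling2_pred_lt HLt).
  apply alt_product_lt_of_le; lia.
Qed.

Section Critical.
Hypothesis HLt : L = (t + 1)%nat.
Hypothesis HLK1 : (L + 1 <= K)%nat.
Hypothesis HK4 : (4 <= K)%nat.
Hypothesis Hm6 : (t + 6 * K + 8 <= m)%nat.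

Lemma K_mul_b_le_twelfth : 12 * INR K * b <= 1.
Proof.
  pose proof b_nonneg; pose proof Hbeta as HB; fold b in HB.
  assert (Ht : INR 1 <= INR t) by (apply le_INR; lia); simpl (INR 1) in Ht.
  assert (HK : INR 4 <= INR K) by (apply le_INR; lia); simpl (INR 4) in HK.
  assert (12 * INR K <= ((INR t + 1) * (INR K + 1)) ^ 2 / 2).
  { assert (2 * (INR K + 1) <= (INR t + 1) * (INR K + 1)) by nra.
    assert ((2 * (INR K + 1)) ^ 2 <= ((INR t + 1) * (INR K + 1)) ^ 2) by (apply pow_incr; lra).
    simpl in *; nra. }
  assert (12 * INR K * b <= ((INR t + 1) * (INR K + 1)) ^ 2 / 2 * b) by (apply Rmult_le_compat_r; lra).
  lra.
Qed.

Lemma r1_term_3_le : (12 * r1_term 3 <= r1_term 2)%Z.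
Proof.
  unfold r1_term; change 12%Z with (Z.of_nat 12); rewrite <- Nat2Z.inj_mul.
  apply Nat2Z.inj_le, INR_le; rewrite !mult_INR.
  pose proof K_mul_b_le_twelfth; pose proof b_nonneg.
  pose proof (stirling_shift_ratio 2 ltac:(lia)) as Hr.
  pose proof (INR_binom_succ_mul L 2) as Hbin.
  assert (HLKr : INR L + 1 <= INR K) by (rewrite <- S_INR; apply le_INR; lia).
  assert (HL2r : INR 2 <= INR L) by (apply le_INR; lia).
  replace (INR 12) with 12 by (simpl; lra); simpl (INR 3) in Hbin; simpl (INR 2) in Hbin, HL2r.
  pose proof (pos_INR (binom L 2)); pose proof (pos_INR (stirling_shift 2)).
  pose proof (pos_INR (stirling_shift 3)).
  set (B2 := INR (binom L 2)) in *; set (B3 := INR (binom L 3)) in *.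
  set (x := INR (stirling_shift 3)) in *; set (y := INR (stirling_shift 2)) in *.
  assert (Hw : 4 * (INR L - 2) * b <= 1 - INR K * b) by nra.
  assert (H4 : 4 * (INR L - 2) * x <= y).
  { apply Rmult_le_reg_r with (1 - INR K * b); [lra|].
    assert (4 * (INR L - 2) * (x * (1 - INR K * b)) <= 4 * (INR L - 2) * (b * y))
      by (apply Rmult_le_compat_l; [lra|auto]).
    assert (y * (4 * (INR L - 2) * b) <= y * (1 - INR K * b)) by (apply Rmult_le_compat_l; lra).
    nra. }
  replace (12 * (B3 * x)) with (B2 * (4 * (INR L - 2) * x)) by nra.
  apply Rmult_le_compat_l; lra.
Qed.

Lemma critical_upper :
  INR (fact (K - 1)) * INR (fact L) *
    (INR t * INR (stirling_shift 1) * (INR (stirling2 (m - 1) (L - 1)) + INR L))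
  <= INR t * INR L * (INR K - 1) ^ (m - 1) * ((INR L - 1) ^ (m - 1) + INR (fact L)).
Proof.
  pose proof (fact_stirling2_le_pow_R (m - 1) (K - 1)) as Ha1.
  pose proof (fact_stirling2_le_pow_R (m - 1) (L - 1)) as HS1.
  change (stirling2 (m - 1) (K - 1)) with (stirling_shift 1) in Ha1.
  rewrite !minus_INR in Ha1, HS1 by lia; simpl (INR 1) in Ha1, HS1.
  pose proof (INR_fact_pred L ltac:(lia)) as HfL.
  pose proof (pos_INR t); pose proof (pos_INR L); pose proof (pos_INR (fact (K - 1))).
  pose proof (pos_INR (fact (L - 1))); pose proof (pos_INR (fact L)).
  pose proof (pos_INR (stirling_shift 1)); pose proof (pos_INR (stirling2 (m - 1) (L - 1))).
  replace (INR (fact (K - 1)) * INR (fact L) *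
    (INR t * INR (stirling_shift 1) * (INR (stirling2 (m - 1) (L - 1)) + INR L)))
    with (INR t * (INR (fact (K - 1)) * INR (stirling_shift 1)) *
          (INR L * (INR (fact (L - 1)) * INR (stirling2 (m - 1) (L - 1))) + INR L * INR (fact L)))
    by (rewrite HfL; ring).
  replace (INR t * INR L * (INR K - 1) ^ (m - 1) * ((INR L - 1) ^ (m - 1) + INR (fact L)))
    with (INR t * (INR K - 1) ^ (m - 1) * (INR L * (INR L - 1) ^ (m - 1) + INR L * INR (fact L)))
    by ring.
  apply Rmult_le_compat.
  - apply Rmult_le_pos; [lra|apply Rmult_le_pos; lra].
  - apply Rplus_le_le_0_compat; apply Rmult_le_pos; try apply Rmult_le_pos; lra.
  - apply Rmult_le_compat_l; lra.
  - apply Rplus_le_compat_r, Rmult_le_compat_l; lra.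
Qed.

Lemma critical_lower :
  (INR K - 1) * ((INR K - 2) ^ (m - 2) * INR L ^ m) * (1 - INR K * b) ^ 2
  <= INR (fact (K - 1)) * INR (fact L) * (INR (stirling_shift 2) * INR (stirling2 m L)).
Proof.
  pose proof (stirling2_lower K (m - K) ltac:(lia) (K - 2) (m - 2) ltac:(lia) ltac:(lia)) as Ha2.
  pose proof (stirling2_lower K (m - K) ltac:(lia) L m ltac:(lia) ltac:(lia)) as HS0.
  fold b in Ha2, HS0; change (stirling2 (m - 2) (K - 2)) with (stirling_shift 2) in Ha2.
  rewrite minus_INR in Ha2 by lia; change (INR 2) with 2 in Ha2.
  pose proof (INR_fact_pred (K - 1) ltac:(lia)) as HfK.
  replace (K - 1 - 1)%nat with (K - 2)%nat in HfK by lia.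
  rewrite minus_INR in HfK by lia; change (INR 1) with 1 in HfK.
  pose proof K_mul_b_le_twelfth; pose proof b_nonneg.
  assert (HK : INR 4 <= INR K) by (apply le_INR; lia); simpl (INR 4) in HK.
  rewrite HfK.
  replace ((INR K - 1) * ((INR K - 2) ^ (m - 2) * INR L ^ m) * (1 - INR K * b) ^ 2)
    with ((INR K - 1) * (((INR K - 2) ^ (m - 2) * (1 - INR K * b)) * (INR L ^ m * (1 - INR K * b))))
    by ring.
  replace ((INR K - 1) * INR (fact (K - 2)) * INR (fact L) *
             (INR (stirling_shift 2) * INR (stirling2 m L)))
    with ((INR K - 1) * ((INR (fact (K - 2)) * INR (stirling_shift 2)) *
                         (INR (fact L) * INR (stirling2 m L)))) by ring.
  apply Rmult_le_compat_l; [lra|].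
  apply Rmult_le_compat; auto; apply Rmult_le_pos; try lra; apply pow_le; try lra; apply pos_INR.
Qed.

(* After multiplying by (K-1)! L!, with c = (L-1) L (K-1) and P = (K-2)^(m-2) L^m, the left
   side is at most 12 c (5/16) P and the right side at least (11/2) c P (1 - K b)^2 > 4 c P. *)
Lemma critical_estimate :
  (12 * (t * stirling_shift 1 * (stirling2 (m - 1) (L - 1) + L))
   < 11 * (binom L 2 * stirling_shift 2 * stirling2 m L))%nat.
Proof.
  pose proof critical_upper as Hup; pose proof critical_lower as Hlow.
  pose proof (pow_sub1_mul_add_fact_le m K L ltac:(lia) ltac:(lia) ltac:(lia) ltac:(lia) ltac:(lia))
    as Hpow.
  apply le_INR in Hpow; rewrite !mult_INR, plus_INR, !pow_INR, !minus_INR in Hpow by lia.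
  replace (INR 16) with 16 in Hpow by (simpl; lra); replace (INR 5) with 5 in Hpow by (simpl; lra).
  change (INR 1) with 1 in Hpow; change (INR 2) with 2 in Hpow.
  pose proof (INR_binom_succ_mul L 1) as HB2; rewrite binom_1_r in HB2; simpl (INR 1) in HB2.
  change (INR 2) with 2 in HB2.
  apply INR_lt; rewrite !mult_INR, !plus_INR.
  replace (INR 12) with 12 by (simpl; lra); replace (INR 11) with 11 by (simpl; lra).
  pose proof K_mul_b_le_twelfth; pose proof b_nonneg.
  assert (HL2r : INR 2 <= INR L) by (apply le_INR; lia); simpl (INR 2) in HL2r.
  assert (HK4r : INR 4 <= INR K) by (apply le_INR; lia); simpl (INR 4) in HK4r.
  assert (Htx : INR t = INR L - 1) by (rewrite HLt, plus_INR; simpl; ring).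
  assert (HF : 0 < INR (fact (K - 1)) * INR (fact L))
    by (apply Rmult_lt_0_compat; apply INR_fact_lt_0).
  assert (Hk1 : (INR K - 1) ^ (m - 1) = (INR K - 1) * (INR K - 1) ^ (m - 2))
    by (replace (m - 1)%nat with (S (m - 2)) by lia; reflexivity).
  rewrite Hk1, Htx in Hup.
  set (P := (INR K - 2) ^ (m - 2) * INR L ^ m) in *.
  set (Q := (INR K - 1) ^ (m - 2) * ((INR L - 1) ^ (m - 1) + INR (fact L))) in *.
  set (c := (INR L - 1) * INR L * (INR K - 1)).
  set (al := 1 - INR K * b) in *.
  assert (HP : 0 < P) by (unfold P; apply Rmult_lt_0_compat; apply pow_lt; lra).
  assert (Hc : 0 < c) by (unfold c; apply Rmult_lt_0_compat; [apply Rmult_lt_0_compat|]; lra).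
  assert (Hal : 121 / 144 <= al ^ 2) by (unfold al; simpl; nra).
  apply Rmult_lt_reg_l with (INR (fact (K - 1)) * INR (fact L)); auto.
  apply Rle_lt_trans with (12 * (c * Q)).
  { rewrite Htx; unfold c, Q; nra. }
  apply Rlt_le_trans with (11 / 2 * (c * (P * al ^ 2))).
  { assert (c * Q <= c * (5 / 16 * P)) by (apply Rmult_le_compat_l; lra).
    assert (c * (121 / 144 * P) <= c * (P * al ^ 2)) by (apply Rmult_le_compat_l; nra).
    nra. }
  replace (INR (binom L 2)) with (INR L * (INR L - 1) / 2) by lra.
  unfold c; nra.
Qed.

Lemma r1_reduced_lt_r2_reduced_critical : (r1_reduced < r2_reduced)%Z.
Proof.
  unfold r1_reduced, r2_reduced; rewrite alt_sum_r1_term_split.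
  pose proof alt_sum_r1_term_tail; pose proof critical_estimate; pose proof r1_term_3_le.
  assert (HB2 : (2 * binom L 2 = L * (L - 1))%nat)
    by (pose proof (binom_succ_mul L 1) as H2; rewrite binom_1_r in H2; lia).
  apply (alt_product_lt_of_eq _ _ (r1_term 3)); try lia.
  unfold r1_term in *; nia.
Qed.

End Critical.

End Estimates.

Open Scope Z_scope.

Lemma SZ_of_nat a b : (1 <= b)%nat -> SZ (Z.of_nat a) (Z.of_nat b) = Z.of_nat (stirling2 a b).
Proof.
  intros Hb; unfold SZ.
  destruct (Z.leb_spec (Z.of_nat b) 0); [lia|].
  destruct (Z.ltb_spec (Z.of_nat a) 0); [lia|].
  rewrite !Nat2Z.id; reflexivity.
Qed.

Lemma SZ_nonpos a b : b <= 0 -> SZ a b = 0.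
Proof. intros Hb; unfold SZ; destruct (Z.leb_spec b 0); lia. Qed.

Section Reduction.
Variables n k l t : nat.
Hypothesis Hl : (t + 2 <= l)%nat.
Hypothesis Hk : (l <= k)%nat.
Hypothesis Hn : (k + 1 <= n)%nat.

Lemma r1_eq_reduced : r1 n k l t = r1_reduced (n - t) (k - t) (l - t) t.
Proof.
  unfold r1, r1_reduced; f_equal.
  - unfold alt_sum; f_equal; apply map_ext_in; intros j Hj; apply in_seq in Hj.
    unfold alt_term, r1_term, stirling_shift; rewrite Nat2Z.inj_mul, Z.mul_assoc; f_equal.
    destruct (Nat.eq_dec j (k - t)) as [E|E].
    + (* S(n-t-j, 0) = 0 on both sides, as n - t - j > 0 *)
      rewrite SZ_nonpos by lia.
      replace (k - t - j)%nat with 0%nat by lia.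
      replace (n - t - j)%nat with (S (n - t - j - 1)) by lia; simpl; ring.
    + replace (Z.of_nat n - Z.of_nat t - Z.of_nat j) with (Z.of_nat (n - t - j)) by lia.
      replace (Z.of_nat k - Z.of_nat t - Z.of_nat j) with (Z.of_nat (k - t - j)) by lia.
      rewrite SZ_of_nat by lia; reflexivity.
  - replace (Z.of_nat n - Z.of_nat t) with (Z.of_nat (n - t)) by lia.
    replace (Z.of_nat l - Z.of_nat t) with (Z.of_nat (l - t)) by lia.
    rewrite SZ_of_nat by lia; reflexivity.
Qed.

Lemma r2_eq_reduced : r2 n k l t = r2_reduced (n - t) (k - t) (l - t) t.
Proof.
  unfold r2, r2_reduced, stirling_shift.
  replace (Z.of_nat n - Z.of_nat t - 1) with (Z.of_nat (n - t - 1)) by lia.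
  replace (Z.of_nat k - Z.of_nat t - 1) with (Z.of_nat (k - t - 1)) by lia.
  replace (Z.of_nat l - Z.of_nat t - 1) with (Z.of_nat (l - t - 1)) by lia.
  replace (Z.of_nat n - Z.of_nat t) with (Z.of_nat (n - t)) by lia.
  replace (Z.of_nat l - Z.of_nat t) with (Z.of_nat (l - t)) by lia.
  rewrite !SZ_of_nat by lia; reflexivity.
Qed.

End Reduction.

Theorem mainTheorem18 (n k l t : nat) :
  (t + 2 <= l)%nat -> (l <= k)%nat ->
  (INR n >= 2 * Lkt k t)%R ->
  ((2 * t + 2 <= l)%nat -> (r1 n k l t > r2 n k l t)%Z) /\
  ((l <= 2 * t + 1)%nat ->
     ~ ((k = 2 * t + 1 /\ l = 2 * t + 1)%nat) -> ~ ((k = 4 /\ l = 3)%nat) ->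
     (r1 n k l t < r2 n k l t)%Z).
Proof.
  intros Hl Hk Hn.
  pose proof (le_of_Lkt n k t 1 ltac:(lia) Hn ltac:(simpl; nia)) as Hn1.
  pose proof (beta_small_of_Lkt n k t ltac:(lia) Hn) as Hbeta.
  rewrite r1_eq_reduced, r2_eq_reduced by lia.
  split.
  - intros Hi; apply Z.lt_gt, r2_reduced_lt_r1_reduced; auto; lia.
  - intros Hii Hex1 Hex2.
    destruct (le_lt_dec (l - t) t) as [HLt|HLt].
    + apply r1_reduced_lt_r2_reduced_of_le; auto; lia.
    + (* the excluded pairs are exactly k - t = l - t = t + 1 and (t, k, l) = (1, 4, 3) *)
      pose proof (le_of_Lkt n k t 3 ltac:(lia) Hn ltac:(simpl; nia)) as Hn3.
      apply r1_reduced_lt_r2_reduced_critical; auto; lia.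
Qed.
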